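(* Let $\mathbf{x}$ be a parking function of length $n$ and run Algorithm A on $\mathbf{x}$. The algorithm terminates, every index $j\in[n]$ is the up feeder of exactly one up step, and the source priority vector $s(\mathbf{x})$ is a permutation of $(-1,-2,\dots,-n)$; moreover, for $i\ne j$, $|s_i(\mathbf{x})|>|s_j(\mathbf{x})|$ if and only if $i$ was the up feeder of an up step occurring before the up step with up feeder $j$.
   Context: A parking function of length $n$ is a sequence of positive integers which, sorted increasingly as $x_{(1)}\le\dots\le x_{(n)}$, satisfies $x_{(k)}\le k$ for all $k$. Algorithm A: Input a parking function $\mathbf{x}\in\mathbb{Z}_{>0}^n$; start with the vertex set $[n]$ and no edges, and set $\mathbf{y}:=\mathbf{x}-(1,\dots,1)$. Repeat the following. (Up step) If some $y_k=0$: let $j:=\max\{k: y_k=0\}$ (the up feeder); for every $k>j$ with $y_k>0$, introduce the directed (up) edge $j\rightarrow k$ and replace $y_k$ by $y_k-1$; replace every entry that was negative at the start of this step by that entry minus $1$; set $y_j:=-1$; repeat. (Down step) Else, if some $y_k>0$: among all indices $j$ such that there is $k<j$ with $y_k>0$ and the edge $k\leftarrow j$ not yet introduced (down feeder candidates), choose $j$ with minimal $y_j$ (the down feeder); for every $k<j$ with $y_k>0$, introduce the directed (down) edge $k\leftarrow j$ (directed from $j$ to $k$) and replace $y_k$ by $y_k-1$; repeat. (Stop) Else (all $y_k<0$): join every pair of vertices not yet joined by an undirected (downish) edge and stop. Output: the mixed graph $P(\mathbf{x})$ and the source priority vector $s(\mathbf{x}):=(y_1,\dots,y_n)$ (final values).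 *)

(* Algorithm A of the paper, modelled as a (possibly
   nondeterministic, because of ties in the down-feeder choice) labelled
   step relation on states.  Indices are 'I_n, i.e. 0-based: vertex i of
   the paper is the ordinal i-1. *)
From HB Require Import structures.
From mathcomp Require Import all_boot all_order all_algebra.
Set Implicit Arguments. Unset Strict Implicit. Unset Printing Implicit Defensive.
Import Order.TTheory GRing.Theory Num.Theory.

Definition parking_function (n : nat) (x : 'I_n -> nat) : Prop :=
  let s := sort leq [seq x i | i <- enum 'I_n] in
  forall k : nat, k < n -> 0 < nth 0 s k <= k.+1.

(* state: the vector y, and the set of down edges introduced so far;
   a pair (j,k) in D means the down edge k <- j (directed from j to k).
   Up edges and the final undirected edges never influence the run or
   the output vector s(x), so they are not recorded. *)
Definition state (n : nat) : Type := ({ffun 'I_n -> int} * {set 'I_n * 'I_n})%type.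

Inductive label (n : nat) : Type :=
| UpStep of 'I_n
| DownStep of 'I_n.

Definition init_state (n : nat) (x : 'I_n -> nat) : state n :=
  ([ffun k => (x k)%:Z - 1]%R, set0).

Definition down_candidate n (st : state n) (j : 'I_n) : Prop :=
  exists k : 'I_n, [/\ k < j, (0 < st.1 k)%R & (j, k) \notin st.2].

Definition astep n (st : state n) (l : label n) (st' : state n) : Prop :=
  match l with
  | UpStep j =>
      st.1 j = 0%R /\ (forall k : 'I_n, st.1 k = 0%R -> k <= j) /\
      st'.2 = st.2 /\
      (forall k : 'I_n, st'.1 k =
         if k == j then (-1)%R
         else if (j < k) && (0 < st.1 k)%R then (st.1 k - 1)%R
         else if (st.1 k < 0)%R then (st.1 k - 1)%R
         else st.1 k)
  | DownStep j =>
      (forall k : 'I_n, st.1 k <> 0%R) /\ (exists k : 'I_n, (0 < st.1 k)%R) /\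
      down_candidate st j /\
      (forall j' : 'I_n, down_candidate st j' -> (st.1 j <= st.1 j')%R) /\
      st'.2 = st.2 :|: [set p : 'I_n * 'I_n | (p.1 == j) && (p.2 < j) && (0 < st.1 p.2)%R] /\
      (forall k : 'I_n, st'.1 k =
         if (k < j) && (0 < st.1 k)%R then (st.1 k - 1)%R else st.1 k)
  end.

Definition stopped n (st : state n) : Prop := forall k : 'I_n, (st.1 k < 0)%R.

Fixpoint is_run n (st : state n) (r : seq (label n * state n)) : Prop :=
  match r with
  | [::] => True
  | (l, st') :: r' => astep st l st' /\ is_run st' r'
  end.

Definition last_state n (st : state n) (r : seq (label n * state n)) : state n :=
  last st (map snd r).

Definition is_up_with n (j : 'I_n) (l : label n) : bool :=
  if l is UpStep k then k == j else false.

From HB Require Import structures.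
From mathcomp Require Import all_boot all_order all_algebra.
From mathcomp Require Import zify.
Import Order.TTheory GRing.Theory Num.Theory.

Set Implicit Arguments. Unset Strict Implicit. Unset Printing Implicit Defensive.

(* Let U be the sequence of up feeders so far.  Along any run the negative
   entries of y are exactly the vertices of U, the i-th of them being
   -(|U| - i) since every later up step decrements it once; so when all
   entries are negative, U enumerates [n] and s(x) is read off from positions
   in U.  Every step lowers the potential sum_k (y_k + 1) over the nonnegative
   y_k, hence termination.  The algorithm can only halt at Stop thanks to the
   bound y_k + #(vertices charged to k) <= n - 1, inherited from x_k <= n: it
   yields a down feeder candidate whenever no entry is zero and some is
   positive. *)

Lemma parking_function_bounds n (x : 'I_n -> nat) :
  parking_function x -> forall i, 0 < x i <= n.
Proof.
move=> pf_x i; set s := sort leq [seq x i | i <- enum 'I_n].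
have x_in_s : x i \in s by rewrite mem_sort map_f // mem_enum.
have size_s : size s = n by rewrite size_sort size_map size_enum_ord.
have idx_lt : index (x i) s < n by rewrite -size_s index_mem.
have := pf_x _ idx_lt; rewrite -/s nth_index // => /andP[-> le_idx].
exact: leq_trans le_idx idx_lt.
Qed.

Section AlgorithmA.
Variable n : nat.
Implicit Types (st : state n) (U : seq 'I_n) (ls : seq (label n)).
Local Open Scope ring_scope.

Definition up_feeder (l : label n) : option 'I_n :=
  if l is UpStep k then Some k else None.

Definition up_feeders ls : seq 'I_n := pmap up_feeder ls.

(* Finished vertices left of k, and down feeders right of k that have fed k;
   a step lowering a nonnegative y_k charges one new vertex to k. *)
Definition charged st (k : 'I_n) : {set 'I_n} :=
  [set j : 'I_n | ((j < k)%N && (st.1 j < 0)) || ((k < j)%N && ((j, k) \in st.2))].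

Definition algA_invariant st U : Prop :=
  [/\ uniq U,
      forall k, (st.1 k < 0) = (k \in U),
      forall k, k \in U -> st.1 k = - (size U - index k U)%:Z &
      forall k, 0 <= st.1 k -> st.1 k + #|charged st k|%:Z <= (n.-1)%:Z].

Lemma negative_up_step st st' j : astep st (UpStep j) st' ->
  forall i, (st'.1 i < 0) = (i == j) || (st.1 i < 0).
Proof.
case=> [_ [_ [_ y'E]]] i; rewrite y'E; case: eqP => //= _.
case: ifP => [/andP[_ pos_i]|_]; first by apply/idP/idP; lia.
by case: ifP => neg_i; [apply/idP/idP; lia | rewrite neg_i].
Qed.

Lemma negative_down_step st st' j : astep st (DownStep j) st' ->
  forall i, (st'.1 i < 0) = (st.1 i < 0).
Proof.
case=> [_ [_ [_ [_ [_ y'E]]]]] i; rewrite y'E.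
by case: ifP => [/andP[_ pos_i]|_] //; apply/idP/idP; lia.
Qed.

Lemma negative_step st l st' k : astep st l st' -> st.1 k < 0 -> st'.1 k < 0.
Proof.
case: l => j step neg_k.
- by rewrite (negative_up_step step) neg_k orbT.
- by rewrite (negative_down_step step).
Qed.

Lemma budget_charge st st' k (j : 'I_n) :
  (st'.1 k = st.1 k - 1 /\ charged st' k \subset j |: charged st k) \/
  (st'.1 k = st.1 k /\ charged st' k \subset charged st k) ->
  st'.1 k + #|charged st' k|%:Z <= st.1 k + #|charged st k|%:Z.
Proof.
case=> [[-> /subset_leq_card le_card] | [-> /subset_leq_card le_card]]; last lia.
by move: le_card; rewrite cardsU1; case: (j \in _) => /=; lia.
Qed.

Lemma budget_up_step st st' j k : astep st (UpStep j) st' -> 0 <= st'.1 k ->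
  st'.1 k + #|charged st' k|%:Z <= st.1 k + #|charged st k|%:Z.
Proof.
move=> step nneg_k; have negE := negative_up_step step.
case: step => [_ [max_j [DE y'E]]]; apply: (@budget_charge _ _ _ j).
have k_neq_j : k != j by apply: contraTneq nneg_k => ->; rewrite y'E eqxx.
have nneg_k0 : 0 <= st.1 k.
  by rewrite leNgt; apply: contraTN nneg_k => neg; rewrite -ltNge negE neg orbT.
move: (y'E k); rewrite (negbTE k_neq_j) [st.1 k < 0]ltNge nneg_k0 /=.
case: ifP => [/andP[lt_jk _] y'k | no_dec y'k]; [left | right]; split=> //.
  by apply/subsetP => i; rewrite !inE negE DE; case: (i =P j) => [->|_]; rewrite ?eqxx.
have lt_kj : (k < j)%N.
  case: (ltngtP k j) => [//|lt_jk|/val_inj kj]; last by rewrite kj eqxx in k_neq_j.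
  have y_k : st.1 k = 0.
    by apply/eqP; move: no_dec; rewrite lt_jk /= eq_le nneg_k0 leNgt => ->.
  by move: (max_j _ y_k); rewrite leqNgt lt_jk.
apply/subsetP => i; rewrite !inE negE DE.
by case: (i =P j) => [->|] //=; rewrite ltnNge (ltnW lt_kj).
Qed.

Lemma budget_down_step st st' j k : astep st (DownStep j) st' ->
  st'.1 k + #|charged st' k|%:Z <= st.1 k + #|charged st k|%:Z.
Proof.
move=> step; have negE := negative_down_step step.
case: step => [_ [_ [_ [_ [DE y'E]]]]]; apply: (@budget_charge _ _ _ j).
move: (y'E k); case: ifP => [_ y'k | no_dec y'k]; [left | right]; split=> //.
  by apply/subsetP => i; rewrite !inE negE DE !inE /=; case: (i =P j) => [->|_]; rewrite ?orbF.
by apply/subsetP => i; rewrite !inE negE DE !inE /= -andbA no_dec andbF orbF.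
Qed.

Lemma algA_invariant_step st l st' U : algA_invariant st U -> astep st l st' ->
  algA_invariant st' (U ++ up_feeders [:: l]).
Proof.
move=> [uniq_U negE valE budget] step.
have budget' k : 0 <= st'.1 k -> st'.1 k + #|charged st' k|%:Z <= (n.-1)%:Z.
  move=> nneg_k; have nneg_k0 : 0 <= st.1 k.
    by rewrite leNgt; apply: contraTN nneg_k => /(negative_step step); rewrite -ltNge.
  have := budget k nneg_k0; case: l step => j step.
  - by have := budget_up_step step nneg_k; lia.
  - by have := budget_down_step k step; lia.
case: l step => j step /=; last first.
  have neg'E := negative_down_step step; case: step => [_ [_ [_ [_ [_ y'E]]]]].
  rewrite cats0; split=> // k; first by rewrite neg'E.
  move=> U_k; have neg_k : st.1 k < 0 by rewrite negE.
  by rewrite y'E ltNge (ltW neg_k) andbF valE.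
have neg'E := negative_up_step step; case: step => [y_j [_ [_ y'E]]].
have j_notin_U : j \notin U by rewrite -negE y_j ltxx.
split=> //.
- by rewrite cat_uniq uniq_U /= orbF j_notin_U.
- by move=> k; rewrite neg'E mem_cat negE inE orbC.
- move=> k; rewrite mem_cat inE size_cat index_cat y'E.
  case: (k =P j) => [->|_] /=; first by rewrite (negbTE j_notin_U) eqxx; lia.
  rewrite orbF => U_k; have neg_k : st.1 k < 0 by rewrite negE.
  rewrite U_k neg_k valE //; have : (index k U < size U)%N by rewrite index_mem.
  by case: ifP => _; lia.
Qed.

Lemma algA_invariant_run r st U : algA_invariant st U -> is_run st r ->
  algA_invariant (last_state st r) (U ++ up_feeders (map fst r)).
Proof.
elim: r st U => [|[l st'] r IHr] st U inv_st /=; first by rewrite cats0.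
case=> step run; have := IHr _ _ (algA_invariant_step inv_st step) run.
by rewrite -catA /up_feeders -pmap_cat.
Qed.

Lemma algA_invariant_init (x : 'I_n -> nat) :
  parking_function x -> algA_invariant (init_state x) [::].
Proof.
move=> /parking_function_bounds x_bnd.
have y0E k : (init_state x).1 k = (x k)%:Z - 1 by rewrite ffunE.
have nneg_y0 k : 0 <= (init_state x).1 k by rewrite y0E; have := x_bnd k; lia.
split=> // k; first by rewrite in_nil ltNge nneg_y0.
have -> : charged (init_state x) k = set0.
  by apply/setP => i; rewrite !inE andbF orbF ltNge nneg_y0 andbF.
by rewrite cards0 y0E; have := x_bnd k; have := ltn_ord k; lia.
Qed.

Definition weight (z : int) : int := if 0 <= z then z + 1 else 0.

Definition potential st : int := \sum_k weight (st.1 k).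

Lemma weight_ge0 z : 0 <= weight z.
Proof. by rewrite /weight; case: ifP => //; lia. Qed.

Lemma le_weight a b : a <= b -> weight a <= weight b.
Proof. by rewrite /weight; case: ifP; case: ifP; lia. Qed.

Lemma lt_weight a b : a < b -> 0 <= b -> weight a < weight b.
Proof. by rewrite /weight; case: ifP; case: ifP; lia. Qed.

Lemma potential_ge0 st : 0 <= potential st.
Proof. by apply: sumr_ge0 => k _; apply: weight_ge0. Qed.

Lemma potential_lt st st' k0 : (forall k, st'.1 k <= st.1 k) ->
  st'.1 k0 < st.1 k0 -> 0 <= st.1 k0 -> potential st' < potential st.
Proof.
move=> le_y lt_k0 nneg_k0; rewrite /potential (bigD1 k0) // [X in _ < X](bigD1 k0) //=.
by apply: ltr_leD; [exact: lt_weight | apply: ler_sum => k _; apply: le_weight].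
Qed.

Lemma potential_step st l st' : astep st l st' -> potential st' < potential st.
Proof.
case: l => j /=.
- case=> [y_j [_ [_ y'E]]]; apply: (@potential_lt _ _ j); rewrite ?y'E ?eqxx ?y_j //.
  move=> k; rewrite y'E; case: eqP => [->|_]; first by rewrite y_j.
  by case: ifP => _; [lia | case: ifP => _; lia].
- case=> [_ [_ [[k0 [lt_k0j pos_k0 _]] [_ [_ y'E]]]]].
  apply: (@potential_lt _ _ k0); rewrite ?y'E ?lt_k0j ?pos_k0 /=; try lia.
  by move=> k; rewrite y'E; case: ifP; lia.
Qed.

Lemma algA_acc st : Acc (fun b a : state n => exists l, astep a l b) st.
Proof.
have [m] : exists m : nat, potential st <= m%:Z.
  by exists (absz (potential st)); have := potential_ge0 st; lia.
elim: m st => [|m IHm] st le_m; constructor => st' [l /potential_step lt_st'].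
- by have := potential_ge0 st'; lia.
- by apply: IHm; lia.
Qed.

Definition down_candidateb st (j : 'I_n) : bool :=
  [exists k : 'I_n, [&& (k < j)%N, 0 < st.1 k & (j, k) \notin st.2]].

Lemma down_candidateP st j : reflect (down_candidate st j) (down_candidateb st j).
Proof.
apply: (iffP existsP) => [[k /and3P[]]|[k []]]; exists k => //.
by apply/and3P.
Qed.

Lemma up_step_exists st z : st.1 z = 0 -> exists l st', astep st l st'.
Proof.
move=> /eqP y_z.
have [j /eqP y_j max_j] :=
  @arg_maxnP _ z (fun i => st.1 i == 0) (fun i : 'I_n => nat_of_ord i) y_z.
exists (UpStep j), ([ffun k : 'I_n => if k == j then -1
  else if (j < k)%N && (0 < st.1 k) then st.1 k - 1
  else if st.1 k < 0 then st.1 k - 1 else st.1 k], st.2).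
by split=> //; split=> [k /eqP/max_j //|]; split=> // k; rewrite ffunE.
Qed.

Lemma down_step_exists st j0 : (forall k, st.1 k <> 0) -> (exists k, 0 < st.1 k) ->
  down_candidate st j0 -> exists l st', astep st l st'.
Proof.
move=> no_zero some_pos /down_candidateP cand_j0.
have [j /down_candidateP cand_j min_j] :=
  @arg_minP _ _ _ j0 (down_candidateb st) (fun i => st.1 i) cand_j0.
exists (DownStep j),
  ([ffun k : 'I_n => if (k < j)%N && (0 < st.1 k) then st.1 k - 1 else st.1 k],
   st.2 :|: [set p : 'I_n * 'I_n | (p.1 == j) && (p.2 < j)%N && (0 < st.1 p.2)]).
do 3 split=> //; split=> [j' /down_candidateP|]; first exact: min_j.
by split=> // k; rewrite ffunE.
Qed.

(* The leftmost positive vertex k would be charged with every other vertex: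
   those left of k are negative, and those right of k have already fed k. *)
Lemma down_candidate_exists st U k0 : algA_invariant st U ->
  (forall k, st.1 k <> 0) -> 0 < st.1 k0 -> exists j, down_candidate st j.
Proof.
move=> [_ _ _ budget] no_zero pos_k0.
case: (boolP [exists j, down_candidateb st j]) => [/existsP[j /down_candidateP]|].
  by exists j.
rewrite negb_exists => /forallP no_cand; exfalso.
have [k pos_k min_k] :=
  @arg_minnP _ k0 (fun i => 0 < st.1 i) (fun i : 'I_n => nat_of_ord i) pos_k0.
suff charged_k : charged st k = [set~ k].
  by have := budget k (ltW pos_k); rewrite charged_k cardsC1 card_ord; lia.
apply/setP => i; rewrite !inE.
case: (ltngtP i k) => [lt_ik|lt_ki|/val_inj ->]; rewrite ?eqxx ?ltnn //=.
- rewrite orbF (_ : i != k) /=; last by apply: contraTneq lt_ik => ->; rewrite ltnn.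
  have : ~~ (0 < st.1 i) by apply: contraTN lt_ik => /min_k; rewrite -leqNgt.
  by rewrite -leNgt le_eqVlt => /orP[/eqP/no_zero|].
- rewrite (_ : i != k) /=; last by apply: contraTneq lt_ki => ->; rewrite ltnn.
  apply: contraNT (no_cand i) => notin.
  by apply/existsP; exists k; rewrite lt_ki pos_k.
Qed.

Lemma algA_stuck_stopped st U : algA_invariant st U ->
  (forall l st', ~ astep st l st') -> stopped st.
Proof.
move=> inv_st stuck k; rewrite ltNge; apply/negP => nneg_k.
have [/existsP[z /eqP y_z]|/existsP zero_free] := boolP [exists z, st.1 z == 0].
  by have [l [st' step]] := up_step_exists y_z; exact: stuck step.
have no_zero k' : st.1 k' <> 0 by move=> y0; apply: zero_free; exists k'; rewrite y0.
have pos_k : 0 < st.1 k by rewrite lt_neqAle eq_sym nneg_k andbT; apply/eqP/no_zero.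
have [j cand_j] := down_candidate_exists inv_st no_zero pos_k.
have [l [st' step]] := down_step_exists no_zero (ex_intro _ k pos_k) cand_j.
exact: stuck step.
Qed.

Lemma count_up_with ls j : count (is_up_with j) ls = count_mem j (up_feeders ls).
Proof. by elim: ls => [|[k|k] ls IHls] //=; rewrite IHls. Qed.

Lemma mem_up_feeders ls d j :
  j \in up_feeders ls <-> exists2 q, (q < size ls)%N & nth d ls q = UpStep j.
Proof.
elim: ls => [|[k|k] ls IHls] /=; first by split=> // [[]].
- rewrite inE; split=> [/orP[/eqP->|/IHls[q lt_q nth_q]]|[[_ [->]|q lt_q nth_q]]].
  + by exists 0%N.
  + by exists q.+1.
  + by rewrite eqxx.
  + by apply/orP; right; apply/IHls; exists q.
- split=> [/IHls[q lt_q nth_q]|[[//|q lt_q nth_q]]]; first by exists q.+1.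
  by apply/IHls; exists q.
Qed.

Definition up_before ls (i j : 'I_n) : Prop :=
  exists p q, [/\ (p < q)%N, nth (UpStep i) ls p = UpStep i & nth (UpStep i) ls q = UpStep j].

Lemma up_before_cons l ls i j : l <> UpStep i ->
  up_before (l :: ls) i j <-> up_before ls i j.
Proof.
move=> l_neq; split=> [[[|p] [[|q] []]]|[p [q [lt_pq nth_p nth_q]]]] //=.
  by exists p, q.
by exists p.+1, q.+1.
Qed.

Lemma index_up_feeders_lt ls i j : uniq (up_feeders ls) ->
  i \in up_feeders ls -> j \in up_feeders ls -> i != j ->
  (index i (up_feeders ls) < index j (up_feeders ls))%N <-> up_before ls i j.
Proof.
elim: ls => [|[k|k] ls IHls] //=; last first.
  by move=> uniq_ls U_i U_j neq_ij; rewrite IHls // up_before_cons.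
case/andP=> k_notin uniq_ls; rewrite !inE.
have [-> _|neq_ki] := eqVneq k i.
  move=> /predU1P[->|U_j neq_ij]; first by rewrite eqxx.
  rewrite (negbTE neq_ij); split=> // _.
  have [q _ nth_q] := (mem_up_feeders ls (UpStep i) j).1 U_j.
  by exists 0%N, q.+1.
have [<- _ _ neq_ik|neq_kj U_i U_j neq_ij] := eqVneq k j.
  split=> //; case=> [p [q [lt_pq _]]]; case: q lt_pq => // q _ /= nth_q.
  have [lt_q|le_q] := ltnP q (size ls).
    by case/negP: k_notin; apply/(mem_up_feeders ls (UpStep i) k); exists q.
  by move: nth_q; rewrite nth_default // => -[eq_ik]; rewrite eq_ik eqxx in neq_ik.
rewrite /= in U_i U_j.
by rewrite ltnS IHls // up_before_cons // => -[/eqP]; rewrite (negbTE neq_ki).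
Qed.

Lemma stopped_up_feeders_perm st U : algA_invariant st U -> stopped st ->
  perm_eq U (enum 'I_n).
Proof.
move=> [uniq_U negE _ _] stop; apply: uniq_perm => // [|k]; first exact: enum_uniq.
by rewrite -negE mem_enum stop.
Qed.

Lemma stopped_values st U k : algA_invariant st U -> stopped st ->
  st.1 k = - (n - index k U)%:Z.
Proof.
move=> inv_st stop; have [_ negE valE _] := inv_st.
by rewrite valE -?negE // (perm_size (stopped_up_feeders_perm inv_st stop)) size_enum_ord.
Qed.

Lemma stopped_abs_lt st U i j : algA_invariant st U -> stopped st ->
  (`|st.1 j| < `|st.1 i|) = (index i U < index j U)%N.
Proof.
move=> inv_st stop; rewrite !(stopped_values _ inv_st stop) !normrN ltz_nat ltn_sub2lE //.
have size_U : size U = n.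
  by rewrite (perm_size (stopped_up_feeders_perm inv_st stop)) size_enum_ord.
by rewrite -[X in (_ <= X)%N]size_U index_size.
Qed.

Lemma perm_neg_ranks U : perm_eq U (enum 'I_n) ->
  perm_eq [seq - (n - index k U)%:Z | k <- enum 'I_n] [seq - (k.+1)%:Z | k <- iota 0 n].
Proof.
move=> permU; set L := [seq _ | k <- enum 'I_n]; set R := [seq _ | k <- iota 0 n].
have lt_idx k : (index k U < n)%N.
  have size_U : size U = n by rewrite (perm_size permU) size_enum_ord.
  by rewrite -[X in (_ < X)%N]size_U index_mem (perm_mem permU) mem_enum.
have uniq_L : uniq L.
  rewrite map_inj_uniq ?enum_uniq // => a b /oppr_inj [eq_ab].
  move/(congr1 (subn n)): eq_ab; rewrite !subKn ?(ltnW (lt_idx _)) // => eq_idx.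
  have U_k k : k \in U by rewrite (perm_mem permU) mem_enum.
  by rewrite -(nth_index a (U_k a)) eq_idx nth_index.
have sub_LR : {subset L <= R}.
  move=> _ /mapP[k _ ->]; have := lt_idx k; set m := index k U => lt_m.
  by apply/mapP; exists (n - m.+1)%N; rewrite ?mem_iota; lia.
have size_LR : (size R <= size L)%N by rewrite !size_map size_iota -enumT -cardT card_ord.
apply: uniq_perm => //; first exact: leq_size_uniq uniq_L sub_LR size_LR.
exact: (uniq_min_size uniq_L sub_LR size_LR).2.
Qed.

End AlgorithmA.

Theorem lemma2p4 (n : nat) (x : 'I_n -> nat) :
  parking_function x ->
  Acc (fun b a : state n => exists l, astep a l b) (init_state x) /\
  (forall r, is_run (init_state x) r ->
     (forall l st', ~ astep (last_state (init_state x) r) l st') ->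
     stopped (last_state (init_state x) r)) /\
  (forall r, is_run (init_state x) r ->
     stopped (last_state (init_state x) r) ->
     let s := (last_state (init_state x) r).1 in
     let ls := map fst r in
     (forall j : 'I_n, count (is_up_with j) ls = 1) /\
     perm_eq [seq s i | i <- enum 'I_n] [seq (- (k.+1)%:Z)%R | k <- iota 0 n] /\
     (forall i j : 'I_n, i != j ->
        ((`|s j| < `|s i|)%R <->
         exists p q, [/\ p < q, nth (UpStep i) ls p = UpStep i & nth (UpStep i) ls q = UpStep j]))).
Proof.
move=> pf_x; have inv0 := algA_invariant_init pf_x.
split; first exact: algA_acc.
split=> [r run stuck | r run stop s ls].
  exact: algA_stuck_stopped (algA_invariant_run inv0 run) stuck.
have := algA_invariant_run inv0 run; rewrite cat0s -/s -/ls => inv.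
have [uniq_U _ _ _] := inv; set U := up_feeders ls in inv uniq_U *.
have permU := stopped_up_feeders_perm inv stop.
have U_k k : k \in U by rewrite (perm_mem permU) mem_enum.
split; first by move=> j; rewrite count_up_with count_uniq_mem ?U_k.
split; first by rewrite (eq_map (fun k => stopped_values k inv stop)); exact: perm_neg_ranks.
move=> i j neq_ij; rewrite (stopped_abs_lt i j inv stop).
exact: (index_up_feeders_lt uniq_U (U_k i) (U_k j) neq_ij).
Qed.
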